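(* Let $E$ be a $KB$-space, let $\mathfrak{B}$ be a Boolean subalgebra of $\mathfrak{B}(E)$, let $\xi$ be a forward filtration in $\mathfrak{B}$ and let $T\colon E\to E$ be a $\mathfrak{B}$-Volterra operator. Let $B'$ be the band generated by $\{(\mathbf{s}^k(x))_{k=0}^\infty: x\in\mathcal{M}_b(\xi)\}$ in the Banach lattice $\big(\bigoplus_{k=0}^\infty\mathcal{M}_b(L^k(\xi))\big)_{\ell_\infty}$. For each $l\ge1$, the operator $(\hat{T}_\xi^l)^{!}((y_k)_{k=0}^\infty)=(\mathbf{s}^k\hat{T}_\xi^l y_0)_{k=0}^\infty$ extends to a norm continuous operator $(\hat{T}_\xi^l)^{!}\colon B'\to\big(\bigoplus_{k=0}^\infty\mathcal{M}_b(L^k(\xi))\big)_{\ell_\infty}$ such that $(\hat{T}_\xi^l)^{!}=((\hat{T}_\xi^1)^{!})^l$; i.e. the correspondence $!$ is a discrete semigroup morphism between the semigroups generated by $\hat{T}_\xi$ and $(\hat{T}_\xi^1)^{!}$.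
   Context: A $KB$-space is a Banach lattice in which every increasing norm bounded sequence is norm convergent. $\mathfrak{B}(E)$ is the Boolean algebra of all order projections on $E$ (zero $\mathbf 0$, unit $\mathbf 1=I_E$, $\pi\le\rho$ iff $\pi\rho=\pi$). A positive operator $T$ is $\mathfrak{B}$-Volterra if for all $\pi\in\mathfrak{B}$, $x,y\in E$, $\pi x=\pi y$ implies $\pi Tx=\pi Ty$. A forward filtration in $\mathfrak{B}$ is a map $\xi\colon\{0,1,\dots,\infty\}\to\mathfrak{B}$ with $\xi_n\le\xi_{n+1}$, $\xi_0=\mathbf 0$, $\xi_\infty=\mathbf 1$; $L(\xi)_0=\xi_0$, $L(\xi)_n=\xi_{n+1}$ ($n\ge1$), $L^0(\xi)=\xi$. $\mathcal{M}_b(\xi)$ is the Banach lattice of sequences $(x_n)_{n\ge1}$ in $E$ with $\xi_nx_m=x_n$ for $m\ge n\ge1$ and $\sup_n\|x_n\|<\infty$ (coordinatewise order, sup norm). $\hat{T}_\xi((x_n))=(\xi_nTx_n)$; $\mathbf{s}((x_n)_{n\ge1})=(x_{n+1})_{n\ge1}$ maps $\mathcal{M}_b(L^k(\xi))$ to $\mathcal{M}_b(L^{k+1}(\xi))$, $\mathbf{s}^k$ is the $k$-fold composite and $\mathbf{s}^0$ the identity. $(\bigoplus_k X_k)_{\ell_\infty}$ is the space of norm bounded sequences with pointwise order and sup norm. *)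

From HB Require Import structures.
From mathcomp Require Import all_boot all_order all_algebra.
From mathcomp Require Import all_classical all_reals all_analysis.
Set Implicit Arguments. Unset Strict Implicit. Unset Printing Implicit Defensive.
Import Order.TTheory GRing.Theory Num.Theory.
Import numFieldNormedType.Exports.
Local Open Scope ring_scope.
Local Open Scope classical_set_scope.

Record BanachLattice (R : realType) (E : completeNormedModType R) := {
  le : E -> E -> Prop;
  join : E -> E -> E;
  le_refl : forall x, le x x;
  le_trans : forall x y z, le x y -> le y z -> le x z;
  le_anti : forall x y, le x y -> le y x -> x = y;
  le_add : forall x y z, le x y -> le (x + z) (y + z);
  le_scale : forall (a : R) x y, 0 <= a -> le x y -> le (a *: x) (a *: y);
  join_ubl : forall x y, le x (join x y);
  join_ubr : forall x y, le y (join x y);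
  join_least : forall x y z, le x z -> le y z -> le (join x y) z;
  norm_lattice : forall x y, le (join x (- x)) (join y (- y)) -> `|x| <= `|y|
}.

Section BL.
Variables (R : realType) (E : completeNormedModType R) (BL : BanachLattice E).

Definition absE (x : E) : E := join BL x (- x).

Definition KB_space : Prop :=
  forall u : nat -> E, (forall n, le BL (u n) (u n.+1)) ->
    (exists M : R, forall n, `|u n| <= M) -> cvg (u @ \oo).

Definition is_linear (f : E -> E) : Prop :=
  (forall x y, f (x + y) = f x + f y) /\ (forall (a : R) x, f (a *: x) = a *: f x).

Definition positive_op (T : E -> E) : Prop :=
  is_linear T /\ forall x, le BL 0 x -> le BL 0 (T x).

(* order projection: a linear projection P with 0 <= P <= I
   (Aliprantis--Burkinshaw: equivalent to being a band projection) *)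
Definition order_projection (P : E -> E) : Prop :=
  is_linear P /\ (forall x, P (P x) = P x) /\
  (forall x, le BL 0 x -> le BL 0 (P x) /\ le BL (P x) x).

Definition proj_zero : E -> E := fun _ => 0.
Definition proj_one : E -> E := id.
Definition proj_le (pi rho : E -> E) : Prop := (pi \o rho) = pi.

Definition boolean_subalgebra (B : set (E -> E)) : Prop :=
  (forall pi, B pi -> order_projection pi) /\
  B proj_zero /\ B proj_one /\
  (forall pi rho, B pi -> B rho -> B (pi \o rho)) /\
  (forall pi rho, B pi -> B rho -> B (fun x => pi x + rho x - pi (rho x))) /\
  (forall pi, B pi -> B (fun x => x - pi x)).

(* forward filtration: xi_n for n : nat, xi_infinity = 1 implicitly *)
Definition forward_filtration (B : set (E -> E)) (xi : nat -> E -> E) : Prop :=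
  (forall n, B (xi n)) /\ xi 0%N = proj_zero /\
  (forall n, proj_le (xi n) (xi n.+1)).

Definition volterra (B : set (E -> E)) (T : E -> E) : Prop :=
  forall pi, B pi -> forall x y, pi x = pi y -> pi (T x) = pi (T y).

(* A sequence (x_n)_{n>=1} is encoded as x : nat -> E with x i = x_{i+1}.
   (L^k xi)_n = xi_{n+k} for n >= 1. *)
Definition in_Mb (xi : nat -> E -> E) (k : nat) (x : nat -> E) : Prop :=
  (forall i j, (i <= j)%N -> xi (i + 1 + k)%N (x j) = x i) /\
  (exists M : R, forall i, `|x i| <= M).

(* Elements of (bigoplus_k M_b(L^k xi))_{l_infty}: y k = k-th component. *)
Definition Wt := nat -> nat -> E.

Definition W_bounded_by (y : Wt) (M : R) : Prop := forall k i, `|y k i| <= M.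

Definition in_W (xi : nat -> E -> E) (y : Wt) : Prop :=
  (forall k, in_Mb xi k (y k)) /\ exists M, W_bounded_by y M.

Definition W_le (y z : Wt) : Prop := forall k i, le BL (y k i) (z k i).
Definition W_abs (y : Wt) : Wt := fun k i => absE (y k i).
Definition W_add (y z : Wt) : Wt := fun k i => y k i + z k i.
Definition W_scale (a : R) (y : Wt) : Wt := fun k i => a *: y k i.
Definition W_zero : Wt := fun _ _ => 0.

Definition W_is_sup (xi : nat -> E -> E) (A : set Wt) (z : Wt) : Prop :=
  in_W xi z /\ (forall y, A y -> W_le y z) /\
  (forall u, in_W xi u -> (forall y, A y -> W_le y u) -> W_le z u).

Definition W_band (xi : nat -> E -> E) (S : set Wt) : Prop :=
  (forall y, S y -> in_W xi y) /\
  S W_zero /\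
  (forall y z, S y -> S z -> S (W_add y z)) /\
  (forall a y, S y -> S (W_scale a y)) /\
  (forall y z, S y -> in_W xi z -> W_le (W_abs z) (W_abs y) -> S z) /\
  (forall A z, A `<=` S -> W_is_sup xi A z -> S z).

Definition shift_k (k : nat) (x : nat -> E) : nat -> E := fun i => x (i + k)%N.

Definition gen_set (xi : nat -> E -> E) : set Wt :=
  [set y | exists x, in_Mb xi 0 x /\ y = fun k => shift_k k x].

Definition band_generated (xi : nat -> E -> E) (D : set Wt) : set Wt :=
  [set y | forall S, W_band xi S -> D `<=` S -> S y].

Definition That (xi : nat -> E -> E) (T : E -> E) (x : nat -> E) : nat -> E :=
  fun i => xi (i + 1)%N (T (x i)).

Definition bang (xi : nat -> E -> E) (T : E -> E) (l : nat) (y : Wt) : Wt :=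
  fun k => shift_k k (iter l (That xi T) (y 0%N)).

End BL.

(** The operators (T̂_ξ^l)^! are given on all of B' by their defining formula.
This makes sense because B' lies in the ℓ∞-sum, so y_0 ∈ M_b(ξ) for y ∈ B', and
T̂_ξ maps M_b(ξ) into itself: for i ≤ j we have ξ_i x_j = x_i = ξ_i x_i, so the
Volterra property gives ξ_i T x_j = ξ_i T x_i. Linearity is inherited from T and
the ξ_n, and the semigroup law holds because the 0-th component of
(T̂_ξ^l)^! y is T̂_ξ^l y_0. Continuity only needs T to be bounded, which is true
of every positive operator on a Banach lattice: otherwise there are positive b_n
with ‖b_n‖ = 2^-n and ‖T b_n‖ > n, and as the positive cone is closed the sum x
of the b_n dominates each b_n, whence ‖T x‖ ≥ ‖T b_n‖ > n for every n. *)

From Pilot Require Import Defs.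
From mathcomp Require Import all_boot all_order all_algebra.
From mathcomp Require Import all_classical all_reals all_analysis.
Import Order.TTheory GRing.Theory Num.Theory.
Import numFieldNormedType.Exports.
Local Open Scope ring_scope.
Local Open Scope classical_set_scope.

Set Implicit Arguments.
Unset Strict Implicit.
Unset Printing Implicit Defensive.

Section BanachLatticeFacts.
Variables (R : realType) (E : completeNormedModType R) (BL : BanachLattice E).
Local Notation le := (Defs.le BL).
Local Notation absE := (absE BL).

Lemma le_subr_ge0 x y : le 0 (y - x) <-> le x y.
Proof.
split=> [|lexy]; first by move/(le_add x); rewrite add0r subrK.
by have := le_add (- x) lexy; rewrite subrr.
Qed.

Lemma ger0_absE x : le 0 x -> absE x = x.
Proof.
move=> x_ge0; apply: Defs.le_anti; last exact: join_ubl.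
apply: join_least; first exact: Defs.le_refl.
apply: (Defs.le_trans _ x_ge0); apply/le_subr_ge0; by rewrite sub0r opprK.
Qed.

Lemma absE_ge0 x : le 0 (absE x).
Proof.
have subx_ge0 : le 0 (absE x - x) by apply/le_subr_ge0; exact: join_ubl.
have addx_ge0 : le 0 (absE x + x).
  by rewrite -[x in _ + x]opprK; apply/le_subr_ge0; exact: join_ubr.
have twice_ge0 : le 0 (absE x *+ 2).
  apply: Defs.le_trans subx_ge0 _; have := le_add (absE x - x) addx_ge0.
  by rewrite add0r addrACA subrr addr0 -mulr2n.
have half_ge0 : 0 <= (2 : R)^-1 by rewrite invr_ge0 ler0n.
have := le_scale half_ge0 twice_ge0.
by rewrite scaler0 -scalerMnr scalerMnl -mulr_natr mulVf ?pnatr_eq0 // scale1r.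
Qed.

Lemma absE_id x : absE (absE x) = absE x.
Proof. exact/ger0_absE/absE_ge0. Qed.

Lemma norm_le_ge0 x y : le 0 x -> le x y -> `|x| <= `|y|.
Proof.
move=> x_ge0 lexy; apply: (@norm_lattice _ _ BL).
rewrite -/(absE x) -/(absE y) (ger0_absE x_ge0) ger0_absE //.
exact: Defs.le_trans lexy.
Qed.

Lemma norm_absE x : `|absE x| = `|x|.
Proof.
by apply/eqP; rewrite eq_le; apply/andP; split; apply: (@norm_lattice _ _ BL);
  rewrite -/(absE _) -/(absE _) absE_id; exact: Defs.le_refl.
Qed.

Lemma is_linear0 (f : E -> E) : is_linear f -> f 0 = 0.
Proof. by case=> _ fZ; rewrite -(scale0r 0) fZ !scale0r. Qed.

Lemma is_linearN (f : E -> E) x : is_linear f -> f (- x) = - f x.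
Proof. by case=> _ fZ; rewrite -scaleN1r fZ scaleN1r. Qed.

Lemma is_linearB (f : E -> E) x y : is_linear f -> f (x - y) = f x - f y.
Proof. by move=> f_lin; rewrite f_lin.1 is_linearN. Qed.

Lemma pos_op_le (f : E -> E) x y : positive_op BL f -> le x y -> le (f x) (f y).
Proof.
by case=> f_lin f_pos /le_subr_ge0/f_pos; rewrite is_linearB // => /le_subr_ge0.
Qed.

Lemma absE_pos_op_le (f : E -> E) x :
  positive_op BL f -> le (absE (f x)) (f (absE x)).
Proof.
move=> f_pos; apply: join_least; first by apply: pos_op_le f_pos _; exact: join_ubl.
rewrite -is_linearN; last exact: f_pos.1.
by apply: pos_op_le f_pos _; exact: join_ubr.
Qed.

Lemma norm_pos_op_le_absE (f : E -> E) x :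
  positive_op BL f -> `|f x| <= `|f (absE x)|.
Proof.
move=> f_pos; rewrite -[`|f (absE x)|]norm_absE ger0_absE; last first.
  exact: f_pos.2 _ (absE_ge0 x).
rewrite -norm_absE; apply: norm_le_ge0 (absE_ge0 _) (absE_pos_op_le _ f_pos).
Qed.

Lemma order_projection_pos P : order_projection BL P -> positive_op BL P.
Proof. by case=> P_lin [_ P_le]; split=> // x /P_le[]. Qed.

Lemma norm_order_projection_le P x : order_projection BL P -> `|P x| <= `|x|.
Proof.
move=> P_op; rewrite -norm_absE -[`|x|]norm_absE.
apply: norm_le_ge0 (absE_ge0 _) _.
apply: Defs.le_trans (absE_pos_op_le _ (order_projection_pos P_op)) _.
exact: (P_op.2.2 _ (absE_ge0 x)).2.
Qed.

Lemma le_cvg_eventually (u : nat -> E) y z :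
  (\forall n \near \oo, le z (u n)) -> u @ \oo --> y -> le z y.
Proof.
move=> z_le /cvgrPdist_lt u_cvg.
set d := join BL (z - y) 0.
(* d, the positive part of z - y, is dominated by |u n - y|, which tends to 0. *)
suff d0 : d = 0.
  by have := le_add y (join_ubl BL (z - y) 0); rewrite -/d d0 subrK add0r.
case: (eqVneq d 0) => // /negPf d_neq0; exfalso.
have d_gt0 : 0 < `|d| by rewrite normr_gt0 d_neq0.
have [n [zn close]] : exists n, le z (u n) /\ `|y - u n| < `|d|.
  by near \oo => n; exists n; split; near: n; [exact: z_le | exact: u_cvg].
have d_le : le d (absE (u n - y)).
  apply: join_least (absE_ge0 _).
  by apply: Defs.le_trans (join_ubl _ _ _); exact: le_add.
have := norm_le_ge0 (join_ubr _ _ _) d_le.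
by rewrite norm_absE distrC => /le_lt_trans/(_ close); rewrite ltxx.
Unshelve. all: by end_near.
Qed.

Lemma le_lim_series (b : nat -> E) m :
  (forall n, le 0 (b n)) -> cvgn (series b) -> le (b m) (limn (series b)).
Proof.
move=> b_ge0 b_cvg.
have series_le_succ n : le (series b n) (series b n.+1).
  by rewrite seriesSr; have := le_add (series b n) (b_ge0 n); rewrite add0r addrC.
have series_mono i j : (i <= j)%N -> le (series b i) (series b j).
  move=> /subnKC <-; elim: (j - i)%N => [|k IH].
    by rewrite addn0; exact: Defs.le_refl.
  by rewrite addnS; exact: Defs.le_trans IH (series_le_succ _).
apply: le_cvg_eventually b_cvg; near=> n.
apply: (Defs.le_trans _ (series_mono m.+1 n _)).
  have := le_add (b m) (series_mono 0%N m (leq0n m)).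
  by rewrite seriesSr /series /= big_geq // add0r.
by near: n; exact: nbhs_infty_gt.
Unshelve. all: by end_near.
Qed.

Lemma pos_op_bounded_on_series (T : E -> E) (b : nat -> E) :
  positive_op BL T -> (forall n, le 0 (b n)) -> cvgn (series b) ->
  exists M, forall n, `|T (b n)| <= M.
Proof.
move=> T_pos b_ge0 b_cvg; exists `|T (limn (series b))| => n.
apply: norm_le_ge0; first exact: T_pos.2.
exact/(pos_op_le T_pos)/le_lim_series.
Qed.

Lemma pos_op_bounded (T : E -> E) :
  positive_op BL T -> exists2 C, 0 <= C & forall x, `|T x| <= C * `|x|.
Proof.
move=> T_pos.
suff [C C_cone] : exists C, forall a, le 0 a -> `|T a| <= C * `|a|.
  exists `|C| => // x; apply: le_trans (norm_pos_op_le_absE x T_pos) _.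
  rewrite -[`|x|]norm_absE; apply: le_trans (C_cone _ (absE_ge0 x)) _.
  by apply: ler_wpM2r => //; exact: ler_norm.
apply: contrapT => unbounded.
have /choice[a a_big] :
    forall n : nat, exists a, le 0 a /\ n%:R * 2 ^+ n * `|a| < `|T a|.
  move=> n; apply: contrapT => no_a; apply: unbounded.
  exists (n%:R * 2 ^+ n) => a a_ge0; rewrite leNgt; apply/negP => a_big.
  by apply: no_a; exists a.
have a_gt0 n : 0 < `|a n|.
  rewrite normr_gt0; apply/eqP => an0; have := (a_big n).2.
  by rewrite an0 (is_linear0 T_pos.1) normr0 mulr0 ltxx.
have scale_gt0 n : 0 < 2 ^+ n * `|a n| by rewrite mulr_gt0 ?exprn_gt0.
pose b n := (2 ^+ n * `|a n|)^-1 *: a n.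
have b_ge0 n : le 0 (b n).
  have inv_ge0 : 0 <= (2 ^+ n * `|a n|)^-1 by rewrite invr_ge0 ltW.
  by have := le_scale inv_ge0 (a_big n).1; rewrite scaler0.
have norm_b n : `|b n| = 2^-1 ^+ n.
  by rewrite normrZ gtr0_norm ?invr_gt0 // invfM divfK ?exprVn // lt0r_neq0.
have Tb_big n : n%:R < `|T (b n)|.
  rewrite T_pos.1.2 normrZ gtr0_norm ?invr_gt0 // ltr_pdivlMl //.
  by rewrite mulrC mulrA; exact: (a_big n).2.
have b_cvg : cvgn (series b).
  apply: normed_cvg.
  rewrite (_ : [normed series b] = series (geometric 1 2^-1)).
    by apply: is_cvg_geometric_series; rewrite ger0_norm ?invf_lt1 ?ltr1n.
  by apply/funext => n; apply: eq_bigr => k _; rewrite /= norm_b mul1r.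
have [M Tb_le] := pos_op_bounded_on_series T_pos b_ge0 b_cvg.
have := lt_trans (truncnS_gt M) (lt_le_trans (Tb_big _) (Tb_le _)).
by rewrite ltxx.
Qed.

End BanachLatticeFacts.

Section Filtration.
Variables (R : realType) (E : completeNormedModType R) (BL : BanachLattice E).
Variables (xi : nat -> E -> E) (T : E -> E) (C : R).
Hypothesis xi_op : forall n, order_projection BL (xi n).
Hypothesis xi_incr : forall n, proj_le (xi n) (xi n.+1).
Hypothesis T_lin : is_linear T.
Hypothesis T_volterra : forall n x y, xi n x = xi n y -> xi n (T x) = xi n (T y).
Hypothesis C_ge0 : 0 <= C.
Hypothesis T_bounded : forall x, `|T x| <= C * `|x|.

Lemma proj_le_filtration m n : (m <= n)%N -> proj_le (xi m) (xi n).
Proof.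
move=> /subnKC <-; apply/funext => x /=; elim: (n - m)%N x => [|k IH] x.
  by rewrite addn0; exact: (xi_op m).2.1.
have xi_incr_x : xi (m + k) (xi (m + k).+1 x) = xi (m + k) x.
  by have := congr1 (fun f => f x) (xi_incr (m + k)).
by rewrite addnS -IH xi_incr_x IH.
Qed.

Lemma norm_That_le x M :
  (forall i, `|x i| <= M) -> forall i, `|That xi T x i| <= C * M.
Proof.
move=> x_le i; apply: le_trans (norm_order_projection_le _ (xi_op _)) _.
by apply: le_trans (T_bounded _) _; exact: ler_wpM2l.
Qed.

Lemma That_in_Mb x : in_Mb xi 0 x -> in_Mb xi 0 (That xi T x).
Proof.
case=> x_adapted [M x_le]; split; last by exists (C * M); exact: norm_That_le.
move=> i j le_ij; rewrite /That !addn0.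
have le_ij1 : (i + 1 <= j + 1)%N by rewrite leq_add2r.
have -> : xi (i + 1)%N (xi (j + 1)%N (T (x j))) = xi (i + 1)%N (T (x j)).
  by have := congr1 (fun f => f (T (x j))) (proj_le_filtration le_ij1).
apply: T_volterra.
by rewrite -[(i + 1)%N]addn0 !x_adapted.
Qed.

Lemma That_lin a x y :
  That xi T (fun i => x i + a *: y i) =
  (fun i => That xi T x i + a *: That xi T y i).
Proof.
apply/funext => i; rewrite /That T_lin.1 T_lin.2.
by rewrite (xi_op _).1.1 (xi_op _).1.2.
Qed.

Lemma norm_iter_That_le l x M : (forall i, `|x i| <= M) ->
  forall i, `|iter l (That xi T) x i| <= C ^+ l * M.
Proof.
move=> x_le; elim: l => [|l IH] i /=; first by rewrite expr0 mul1r.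
by rewrite exprS -mulrA; exact: norm_That_le.
Qed.

Lemma iter_That_in_Mb l x : in_Mb xi 0 x -> in_Mb xi 0 (iter l (That xi T) x).
Proof. by move=> x_Mb; elim: l => //= l; exact: That_in_Mb. Qed.

Lemma iter_That_lin l a x y :
  iter l (That xi T) (fun i => x i + a *: y i) =
  (fun i => iter l (That xi T) x i + a *: iter l (That xi T) y i).
Proof. by elim: l => //= l ->; exact: That_lin. Qed.

Lemma shift_in_W x : in_Mb xi 0 x -> in_W xi (fun k => shift_k k x).
Proof.
case=> x_adapted [M x_le]; split; last by exists M => k i; exact: x_le.
move=> k; split; last by exists M => i; exact: x_le.
move=> i j le_ij; rewrite /shift_k -(x_adapted (i + k) (j + k)) ?leq_add2r //.
by rewrite addn0 addnAC.
Qed.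

Lemma in_W_band : W_band BL xi (in_W xi).
Proof.
have xi0 n : xi n 0 = 0 by exact: is_linear0 (xi_op n).1.
split=> //; split.
  split=> [k|]; last by exists 0 => k i; rewrite normr0.
  by split=> [i j _|]; [exact: xi0 | exists 0 => i; rewrite normr0].
split.
  move=> y z [y_Mb [My y_le]] [z_Mb [Mz z_le]].
  have yz_le k i : `|W_add y z k i| <= My + Mz.
    by apply: le_trans (ler_normD _ _) _; exact: lerD.
  split; last by exists (My + Mz).
  move=> k; split; last by exists (My + Mz).
  move=> i j le_ij; rewrite /W_add (xi_op _).1.1.
  by rewrite (y_Mb k).1 // (z_Mb k).1.
split.
  move=> a y [y_Mb [M y_le]].
  have ay_le k i : `|W_scale a y k i| <= `|a| * M.
    by rewrite normrZ; exact: ler_wpM2l.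
  split; last by exists (`|a| * M).
  move=> k; split; last by exists (`|a| * M).
  by move=> i j le_ij; rewrite /W_scale (xi_op _).1.2 (y_Mb k).1.
by split=> [y z _ //|A z _ []].
Qed.

Lemma band_generated_sub_in_W : band_generated BL xi (gen_set xi) `<=` in_W xi.
Proof.
move=> y; apply; first exact: in_W_band.
by move=> _ [x [x_Mb ->]]; exact: shift_in_W.
Qed.

Lemma bang_in_W l y : in_Mb xi 0 (y 0%N) -> in_W xi (bang xi T l y).
Proof. by move=> y0_Mb; exact/shift_in_W/iter_That_in_Mb. Qed.

Lemma bang1_in_gen_set y : in_Mb xi 0 (y 0%N) -> gen_set xi (bang xi T 1 y).
Proof.
by move=> y0_Mb; exists (That xi T (y 0%N)); split=> //; exact: That_in_Mb.
Qed.

Lemma bang_lin l a y z :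
  bang xi T l (W_add y (W_scale a z)) =
  W_add (bang xi T l y) (W_scale a (bang xi T l z)).
Proof. by rewrite /bang /W_add /W_scale iter_That_lin. Qed.

Lemma bang_bounded l y M :
  W_bounded_by y M -> W_bounded_by (bang xi T l y) (C ^+ l * M).
Proof. by move=> y_le k i; apply: norm_iter_That_le => j; exact: y_le. Qed.

Lemma bangS l y : bang xi T l.+1 y = bang xi T 1 (bang xi T l y).
Proof.
have shift0 (x : nat -> E) : shift_k 0 x = x.
  by apply/funext => i; rewrite /shift_k addn0.
by rewrite /bang /= shift0.
Qed.

Lemma bang_iter l y : bang xi T l.+1 y = iter l.+1 (bang xi T 1) y.
Proof. by elim: l => // l IH; rewrite bangS IH. Qed.

End Filtration.

Theorem theorem4p9 (R : realType) (E : completeNormedModType R)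
  (BL : BanachLattice E) (B : set (E -> E)) (xi : nat -> E -> E) (T : E -> E) :
  KB_space BL ->
  boolean_subalgebra BL B ->
  forward_filtration B xi ->
  positive_op BL T ->
  volterra B T ->
  let B' := band_generated BL xi (gen_set xi) in
  exists Phi : nat -> Wt E -> Wt E,
    (forall y, B' y -> B' (Phi 1%N y)) /\
    forall l : nat, (1 <= l)%N ->
      (forall y, B' y -> Phi l y = bang xi T l y) /\
      (forall y, B' y -> in_W xi (Phi l y)) /\
      (forall (a : R) y z, B' y -> B' z ->
          Phi l (W_add y (W_scale a z)) = W_add (Phi l y) (W_scale a (Phi l z))) /\
      (exists C : R, forall y M, B' y -> W_bounded_by y M ->
          W_bounded_by (Phi l y) (C * M)) /\
      (forall y, B' y -> Phi l y = iter l (Phi 1%N) y).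
Proof.
move=> _ B_alg xi_filt T_pos T_volterra B'.
have xi_op n : order_projection BL (xi n) := B_alg.1 _ (xi_filt.1 n).
have T_volterra_xi n := T_volterra _ (xi_filt.1 n).
have [C C_ge0 T_bounded] := pos_op_bounded T_pos.
have B'_in_W := band_generated_sub_in_W xi_op.
exists (bang xi T); split.
  move=> y /B'_in_W[y_Mb _] S _ gen_sub; apply: gen_sub.
  exact: bang1_in_gen_set xi_op xi_filt.2.2 T_volterra_xi C_ge0 T_bounded _
    (y_Mb 0%N).
case=> // l _; split=> //; split.
  move=> y /B'_in_W[y_Mb _].
  exact: bang_in_W xi_op xi_filt.2.2 T_volterra_xi C_ge0 T_bounded _ _
    (y_Mb 0%N).
split; first by move=> a y z _ _; exact: (bang_lin xi_op T_pos.1).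
split; first by exists (C ^+ l.+1) => y M _; exact: bang_bounded.
by move=> y _; exact: bang_iter.
Qed.
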